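(* In the setting of the context (an agent running fixed-parameter $\mathrm{EXPN}$ with $b$ neighbors whose distributions satisfy $q^i_j(t)\ge\varepsilon_i/K$ for all $i,j,t$), for every time $t$, $$\sum_{j=1}^K\frac{p_j(t)}{p'_j(t)}\le \frac{1}{1-\left(1-\frac1K\right)\Theta}+1=\beta,\qquad\text{where }\Theta=\prod_{i=1}^b\left(1-\frac{\varepsilon_i}{K}\right).$$
   Context: There are $K$ arms. An agent has $b$ neighbors; at time $t$ neighbor $i$ selects an arm according to a probability distribution $q^i(t)=(q^i_1(t),\dots,q^i_K(t))$ satisfying $q^i_j(t)\ge\varepsilon_i/K$ for all arms $j$, with $\varepsilon_i\in(0,1]$. The agent selects arms according to the probability distribution $p(t)$ of the fixed-parameter $\mathrm{EXPN}$ algorithm: with $\eta\in[0,1]$, $\delta>0$, positive weights $w_j(t)$ (with $w_j(1)=1$, $w_j(t+1)=w_j(t)e^{\delta\hat g_j(t)}$ for nonnegative reward estimates $\hat g_j(t)$), $W_t=\sum_j w_j(t)$, and $p_j(t)=(1-\eta)\frac{w_j(t)}{W_t}+\frac{\eta}{K}$. Here $p'_j(t)=1-(1-p_j(t))\prod_{i=1}^b(1-q^i_j(t))$. *)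

From mathcomp Require Import all_boot all_order all_algebra.
From mathcomp Require Import all_classical all_reals all_analysis.
Set Implicit Arguments. Unset Strict Implicit. Unset Printing Implicit Defensive.
Import Order.TTheory GRing.Theory Num.Theory.
Local Open Scope ring_scope.

(* Time is indexed by nat starting at 0 (paper's time t = our t-1). *)
Fixpoint expn_weight (R : realType) (K : nat) (delta : R)
    (ghat : nat -> 'I_K -> R) (t : nat) (j : 'I_K) : R :=
  match t with
  | 0 => 1
  | t'.+1 => expn_weight delta ghat t' j * expR (delta * ghat t' j)
  end.

Definition expn_W (R : realType) (K : nat) (delta : R)
    (ghat : nat -> 'I_K -> R) (t : nat) : R :=
  \sum_(k < K) expn_weight delta ghat t k.

Definition expn_p (R : realType) (K : nat) (eta delta : R)
    (ghat : nat -> 'I_K -> R) (t : nat) (j : 'I_K) : R :=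
  (1 - eta) * (expn_weight delta ghat t j / expn_W delta ghat t) + eta / K%:R.

Definition p_prime (R : realType) (K b : nat) (eta delta : R)
    (ghat : nat -> 'I_K -> R) (q : nat -> 'I_b -> 'I_K -> R)
    (t : nat) (j : 'I_K) : R :=
  1 - (1 - expn_p eta delta ghat t j) * \prod_(i < b) (1 - q t i j).

Definition Theta (R : realType) (K b : nat) (eps : 'I_b -> R) : R :=
  \prod_(i < b) (1 - eps i / K%:R).

From mathcomp Require Import all_boot all_order all_algebra.
From mathcomp Require Import all_classical all_reals all_analysis.
From mathcomp Require Import ring lra.
Import Order.TTheory GRing.Theory Num.Theory.
Local Open Scope ring_scope.

(* Each neighbour misses arm j with probability at most 1 - eps_i/K, so the
   product in p'_j is at most Theta and
   p_j / p'_j <= p_j / (1 - (1 - p_j) Theta).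
   This is concave in p_j, hence below its tangent line at 1/K; summed over the
   probability vector p the tangents give K times the value at 1/K, which is
   1 / (1 - (1 - 1/K) Theta).  The final "+ 1" of the bound is slack. *)

Lemma ler_sum_entry (R : numDomainType) (I : finType) (F : I -> R) (i : I) :
  (forall j, 0 <= F j) -> F i <= \sum_j F j.
Proof. by move=> F0; rewrite (bigD1 i) //= lerDl sumr_ge0. Qed.

Section ObserveRatio.
Context {R : realFieldType}.

Definition observe_ratio (P x : R) : R := x / (1 - (1 - x) * P).

Lemma observe_ratio_le {P Th x : R} :
  0 < x <= 1 -> 0 <= P <= Th -> Th <= 1 ->
  observe_ratio P x <= observe_ratio Th x.
Proof.
move=> /andP[x0 x1] /andP[P0 PTh] Th1.
rewrite /observe_ratio ler_pM2l // lef_pV2 ?posrE; nra.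
Qed.

Lemma observe_ratio_tangent {Th a x : R} :
  0 <= Th <= 1 -> 0 < a -> 0 < x ->
  observe_ratio Th x <=
    observe_ratio Th a + (1 - Th) * (x - a) / (1 - (1 - a) * Th) ^+ 2.
Proof.
move=> /andP[Th0 Th1] a0 x0.
have Ea : 0 < 1 - (1 - a) * Th by nra.
have Ex : 0 < 1 - (1 - x) * Th by nra.
rewrite -subr_ge0 /observe_ratio.
have -> : a / (1 - (1 - a) * Th) + (1 - Th) * (x - a) / (1 - (1 - a) * Th) ^+ 2
          - x / (1 - (1 - x) * Th)
        = (1 - Th) * Th * (x - a) ^+ 2
          / ((1 - (1 - a) * Th) ^+ 2 * (1 - (1 - x) * Th)).
  by field; rewrite !gt_eqF.
apply: divr_ge0; last by rewrite mulr_ge0 ?sqr_ge0 ?ltW.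
by rewrite mulr_ge0 ?sqr_ge0 // mulr_ge0 // subr_ge0.
Qed.

Lemma sum_observe_ratio_le {K : nat} {Th : R} {p : 'I_K -> R} :
  (0 < K)%N -> 0 <= Th <= 1 -> (forall j, 0 < p j) -> \sum_(j < K) p j = 1 ->
  \sum_(j < K) observe_ratio Th (p j) <= 1 / (1 - (1 - 1 / K%:R) * Th).
Proof.
move=> K0 Th01 p0 sum_p.
pose a : R := 1 / K%:R.
have a0 : 0 < a by rewrite divr_gt0 ?ltr0n.
have tangent j := observe_ratio_tangent Th01 a0 (p0 j).
apply: le_trans (ler_sum _ (fun j _ => tangent j)) _.
have uniform_sum : a *+ K = 1.
  by rewrite /a mul1r -[_ *+ K]mulr_natr mulVf // pnatr_eq0 -lt0n.
rewrite big_split /= sumr_const card_ord -mulr_suml -mulr_sumr sumrB sum_p.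
rewrite sumr_const card_ord uniform_sum subrr mulr0 mul0r addr0.
by rewrite /observe_ratio -mulrnAl uniform_sum.
Qed.

End ObserveRatio.

Section Expn.
Variables (R : realType) (K : nat) (eta delta : R) (ghat : nat -> 'I_K -> R).
Hypothesis K_gt0 : (0 < K)%N.

Lemma expn_weight_gt0 t j : 0 < expn_weight delta ghat t j.
Proof. by elim: t => [|t IH] /=; rewrite ?ltr01 ?mulr_gt0 ?expR_gt0. Qed.

Lemma expn_W_gt0 t : 0 < expn_W delta ghat t.
Proof.
apply: lt_le_trans (expn_weight_gt0 t (Ordinal K_gt0)) _.
by apply: ler_sum_entry => j; apply/ltW/expn_weight_gt0.
Qed.

Lemma expn_p_gt0 t j : 0 <= eta <= 1 -> 0 < expn_p eta delta ghat t j.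
Proof.
move=> /andP[eta0 eta1]; rewrite /expn_p.
have w_gt0 := divr_gt0 (expn_weight_gt0 t j) (expn_W_gt0 t).
have invK_gt0 : 0 < K%:R^-1 :> R by rewrite invr_gt0 ltr0n.
rewrite /(_ / _)%R in w_gt0 *; nra.
Qed.

Lemma sum_expn_p t : \sum_(j < K) expn_p eta delta ghat t j = 1.
Proof.
rewrite /expn_p big_split /= -mulr_sumr -mulr_suml sumr_const card_ord.
rewrite -/(expn_W delta ghat t) divff ?gt_eqF ?expn_W_gt0 // mulr1.
by rewrite -mulr_natr; field; rewrite pnatr_eq0 -lt0n.
Qed.

End Expn.

Section Theta.
Variables (R : realType) (K b : nat) (eps : 'I_b -> R).

Lemma Theta_ge0_le1 :
  (forall i, 0 <= eps i / K%:R <= 1) -> 0 <= Theta K eps <= 1.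
Proof.
move=> eps01; rewrite prodr_ile1 ?andbT => [|i _].
  by apply: prodr_ge0 => i _; rewrite subr_ge0; case/andP: (eps01 i).
by rewrite subr_ge0 lerBlDr lerDl; case/andP: (eps01 i) => -> ->.
Qed.

Lemma prod_miss_le_Theta (r : 'I_b -> R) :
  (forall i, eps i / K%:R <= r i <= 1) ->
  0 <= \prod_(i < b) (1 - r i) <= Theta K eps.
Proof.
move=> r_bounds; rewrite prodr_ge0 => [|i _]; last first.
  by rewrite subr_ge0; case/andP: (r_bounds i).
apply: ler_prod => i _; case/andP: (r_bounds i) => eps_r r1.
by rewrite subr_ge0 r1 lerB.
Qed.

End Theta.

Theorem mainTheorem4 (R : realType) (K b : nat) (eta delta : R)
    (ghat : nat -> 'I_K -> R) (q : nat -> 'I_b -> 'I_K -> R)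
    (eps : 'I_b -> R) :
  (0 < K)%N ->
  0 <= eta <= 1 ->
  0 < delta ->
  (forall s j, 0 <= ghat s j) ->
  (forall i, 0 < eps i <= 1) ->
  (forall s i j, 0 <= q s i j) ->
  (forall s i, \sum_(j < K) q s i j = 1) ->
  (forall s i j, eps i / K%:R <= q s i j) ->
  forall t : nat,
    \sum_(j < K) expn_p eta delta ghat t j / p_prime eta delta ghat q t j
    <= 1 / (1 - (1 - 1 / K%:R) * Theta K eps) + 1.
Proof.
move=> K0 eta01 _ _ eps01 q_ge0 q_sum1 eps_le_q t.
have q_le1 i j : q t i j <= 1.
  by rewrite -(q_sum1 t i); apply: ler_sum_entry; apply: q_ge0.
have eps_bounds i : 0 <= eps i / K%:R <= 1.
  case/andP: (eps01 i) => eps0 _.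
  rewrite divr_ge0 ?(ltW eps0) ?ler0n //=.
  exact: le_trans (eps_le_q t i (Ordinal K0)) (q_le1 _ _).
have Theta01 : 0 <= Theta K eps <= 1 by apply: Theta_ge0_le1.
have p_gt0 j : 0 < expn_p eta delta ghat t j by apply: expn_p_gt0.
have p_sum : \sum_(j < K) expn_p eta delta ghat t j = 1 by apply: sum_expn_p.
apply: le_trans (_ : _ <= 1 / (1 - (1 - 1 / K%:R) * Theta K eps)) _; last first.
  by rewrite lerDl.
apply: le_trans _ (sum_observe_ratio_le K0 Theta01 p_gt0 p_sum).
apply: ler_sum => j _; apply: observe_ratio_le.
- by rewrite p_gt0 -p_sum ler_sum_entry // => k; apply/ltW.
- by apply: prod_miss_le_Theta => i; rewrite eps_le_q q_le1.
- by case/andP: Theta01.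
Qed.
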